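(* Let $c>2/\log e$ and let $n$ be any positive integer. If $d\in[n]$ and $m\ge c\,n\,2^{2d}$, then $\mathcal{F}\sim\mathcal{F}(m,n,d)^{\otimes 2}$ is unsatisfiable with high probability.
   Context: $\log$ denotes base-2 logarithm. $\mathcal{F}(m,n,d)$ is the distribution of random $d$-CNFs on $n$ variables obtained by sampling $m$ clauses independently and uniformly with replacement from the $\binom{n}{d}2^d$ clauses on $d$ distinct variables. For disjoint variable sets $X=\{x_1,\dots,x_n\}$ and $Y=\{y_1,\dots,y_n\}$, $\mathcal{F}(m,n,d)^{\otimes 2}$ is the distribution of $2d$-CNFs obtained by sampling $C^1_1\wedge\dots\wedge C^1_m\sim\mathcal{F}(m,n,d)$ on $X$ and independently $C^2_1\wedge\dots\wedge C^2_m\sim\mathcal{F}(m,n,d)$ on $Y$, and outputting $(C^1_1\vee C^2_1)\wedge\dots\wedge(C^1_m\vee C^2_m)$. ''With high probability'' means with probability tending to $1$ as $n\to\infty$. *)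

From Stdlib Require Import Reals.
From Coquelicot Require Import Coquelicot.
From mathcomp Require Import all_boot.

Local Open Scope R_scope.
Set Implicit Arguments.
Unset Strict Implicit.
Unset Printing Implicit Defensive.

Definition log2 (x : R) : R := ln x / ln 2.

(* A clause on d distinct variables among x_0..x_{n-1}:
   f i = None  : variable i does not occur;
   f i = Some true  : literal x_i occurs;
   f i = Some false : literal ~x_i occurs.  This type is in bijection with the
   binom(n,d) 2^d clauses on d distinct variables. *)
Definition clause (n d : nat) :=
  {f : {ffun 'I_n -> option bool} | #|[pred i | f i != None]| == d}.

Definition assignment (n : nat) := {ffun 'I_n -> bool}.

Definition clause_sat (n d : nat) (C : clause n d) (a : assignment n) : bool :=
  [exists i : 'I_n, val C i == Some (a i)].

(* An outcome of F(m,n,d)^{(x)2}: the m clauses C^1_j on X and the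
   m clauses C^2_j on Y (each an independent uniform sample). *)
Definition formula2 (m n d : nat) :=
  ({ffun 'I_m -> clause n d} * {ffun 'I_m -> clause n d})%type.

(* Satisfiability of (C^1_1 \/ C^2_1) /\ ... /\ (C^1_m \/ C^2_m)
   over variables X (assignment a) and Y (assignment b). *)
Definition sat2 (m n d : nat) (F : formula2 m n d) : bool :=
  [exists a : assignment n, exists b : assignment n,
     [forall j : 'I_m, clause_sat (F.1 j) a || clause_sat (F.2 j) b]].

(* Probability (uniform measure on all outcomes = independent uniform
   sampling with replacement) that F ~ F(m,n,d)^{(x)2} is satisfiable. *)
Definition prob_sat2 (m n d : nat) : R :=
  INR #|[pred F : formula2 m n d | sat2 F]| / INR #|{: formula2 m n d}|.

(* Union bound over the 4^n pairs of assignments (a, b).  Replacing every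
   literal of a clause by the literal that a falsifies maps all clauses onto
   the clauses falsified by a, with fibres of size at most 2^d; so a uniform
   pair of clauses is falsified by (a, b) with probability at least 4^-d.
   Hence (a, b) satisfies all m disjunctions with probability at most
   (1 - 4^-d)^m <= exp (-m 4^-d) <= exp (-c n), and the satisfiability
   probability is at most (4 exp (-c))^n, which tends to 0 as c > 2 ln 2. *)

From Stdlib Require Import Reals Lra.
From Coquelicot Require Import Coquelicot.
From mathcomp Require Import all_boot.

Set Implicit Arguments.
Unset Strict Implicit.
Unset Printing Implicit Defensive.

Local Open Scope nat_scope.

Lemma leq_expn2r m1 m2 e : m1 <= m2 -> m1 ^ e <= m2 ^ e.
Proof. by move=> le_m; elim: e => // e IHe; rewrite !expnS leq_mul. Qed.

Lemma card_ffun_pair_all (I T : finType) (Q : pred (T * T)) :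
  #|[pred F : {ffun I -> T} * {ffun I -> T} | [forall j, Q (F.1 j, F.2 j)]]|
  = #|Q| ^ #|I|.
Proof.
pose zip (F : {ffun I -> T} * {ffun I -> T}) := [ffun j => (F.1 j, F.2 j)].
have zip_inj : injective zip.
  move=> [f1 g1] [f2 g2] /ffunP eq_zip.
  by congr pair; apply/ffunP => j; have := eq_zip j; rewrite !ffunE => -[].
rewrite -card_ffun_on -(card_imset _ zip_inj); apply: eq_card => G.
apply/imsetP/ffun_onP => [[F /forallP QF ->] j | QG].
  by rewrite ffunE; exact: QF.
exists ([ffun j => (G j).1], [ffun j => (G j).2]).
  by rewrite inE; apply/forallP => j; rewrite !ffunE -surjective_pairing; exact: QG.
by apply/ffunP => j; rewrite !ffunE -surjective_pairing.
Qed.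

Lemma card_le_sum_cover (T U : finType) (S : pred T) (P : U -> pred T) :
  (forall x, S x -> exists u, P u x) -> #|S| <= \sum_(u : U) #|P u|.
Proof.
move=> cover; rewrite -sum1_card big_mkcond /=.
under [X in _ <= X]eq_bigr => u _ do rewrite -sum1_card big_mkcond /=.
rewrite exchange_big /=; apply: leq_sum => x _.
case: ifP => // /cover [u Pux].
by rewrite (bigD1 u) //= [in X in X + _]unfold_in Pux.
Qed.

Section Falsify.

Variables (n d : nat) (a : assignment n).

Definition falsified : pred (clause n d) := [pred C | ~~ clause_sat C a].

Definition falsify_lits (f : {ffun 'I_n -> option bool}) :
  {ffun 'I_n -> option bool} :=
  [ffun i => if f i is Some _ then Some (~~ a i) else None].

Lemma falsify_lits_eq_None f i : (falsify_lits f i == None) = (f i == None).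
Proof. by rewrite ffunE; case: (f i). Qed.

Lemma card_falsify_lits (C : clause n d) :
  #|[pred i | falsify_lits (val C) i != None]| == d.
Proof.
have -> : #|[pred i | falsify_lits (val C) i != None]|
          = #|[pred i | val C i != None]|.
  by apply: eq_card => i; rewrite !inE falsify_lits_eq_None.
exact: (valP C).
Qed.

Definition falsify (C : clause n d) : clause n d :=
  exist _ (falsify_lits (val C)) (card_falsify_lits C).

Lemma falsified_falsify C : falsified (falsify C).
Proof.
apply/existsPn => i /=; rewrite ffunE.
by case: (val C i) => //= _; case: (a i).
Qed.

Definition true_lits (C : clause n d) : {set 'I_n} :=
  [set i | val C i == Some (a i)].

(* A clause in the fibre over D is determined by the set of its literals that
   are true under a, which is a subset of the support of D. *)
Lemma card_falsify_fiber (D : clause n d) :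
  #|[pred C | falsify C == D]| <= 2 ^ d.
Proof.
set supp := [set i | val D i != None].
have card_supp : #|powerset supp| = 2 ^ d.
  by rewrite card_powerset cardsE (eqP (valP D)).
rewrite -card_supp -(card_in_imset (f := true_lits)).
  apply/subset_leq_card/subsetP => _ /imsetP [C /eqP eqD ->].
  rewrite inE; apply/subsetP => i; rewrite !inE -eqD falsify_lits_eq_None.
  by move/eqP ->.
move=> C1 C2 /eqP eq1 /eqP eq2 /setP eq_true; apply: val_inj; apply/ffunP => i.
have := congr1 (fun C : clause n d => val C i) (etrans eq1 (esym eq2)).
have := eq_true i; rewrite /= !inE !ffunE.
by case: (val C1 i) => [[]|]; case: (val C2 i) => [[]|]; case: (a i).
Qed.

Lemma card_clause_le : #|{: clause n d}| <= 2 ^ d * #|falsified|.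
Proof.
rewrite -sum1_card (partition_big falsify falsified) /=; last first.
  by move=> C _; exact: falsified_falsify.
rewrite mulnC -sum_nat_const; apply: leq_sum => D _.
rewrite sum1dep_card; apply: leq_trans (card_falsify_fiber D).
by apply/subset_leq_card/subsetP => C; rewrite !inE.
Qed.

End Falsify.

Arguments falsified {n} d a.

Section ClausePairs.

Variables (n d : nat) (a b : assignment n).

Definition sat_pairs : pred (clause n d * clause n d) :=
  [pred p | clause_sat p.1 a || clause_sat p.2 b].

Lemma card_sat_pairsD :
  #|sat_pairs| + #|falsified d a| * #|falsified d b| = #|{: clause n d}| ^ 2.
Proof.
rewrite -(cardsE (falsified d a)) -(cardsE (falsified d b)) -cardsX.
rewrite -mulnn -card_prod -(cardC sat_pairs); congr (_ + _).
by apply: eq_card => p; rewrite !inE negb_or.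
Qed.

Lemma card_sat_pairs_le :
  #|sat_pairs| * 4 ^ d <= #|{: clause n d}| ^ 2 * (4 ^ d - 1).
Proof.
have := card_sat_pairsD.
have Ka := card_clause_le d a; have Kb := card_clause_le d b.
set K := #|{: clause n d}| in Ka Kb *.
set Fa := #|falsified d a| in Ka *; set Fb := #|falsified d b| in Kb *.
move=> eqK; have le_K2 : K ^ 2 <= 4 ^ d * (Fa * Fb).
  by rewrite -mulnn -[4]/(2 * 2) expnMn mulnACA leq_mul.
rewrite mulnBr muln1 -eqK mulnDl (mulnC (Fa * Fb)) -addnBA ?leq_addr //.
by rewrite -eqK in le_K2.
Qed.

End ClausePairs.

Arguments sat_pairs {n} d a b.

Lemma card_sat2_le m n d :
  #|[pred F : formula2 m n d | sat2 F]| * (4 ^ d) ^ m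
  <= 4 ^ n * #|{: formula2 m n d}| * (4 ^ d - 1) ^ m.
Proof.
pose P (ab : assignment n * assignment n) :=
  [pred F : formula2 m n d | [forall j, sat_pairs d ab.1 ab.2 (F.1 j, F.2 j)]].
have cover : forall F, sat2 F -> exists ab, P ab F.
  by move=> F /existsP [a /existsP [b sat_ab]]; exists (a, b).
apply: leq_trans (leq_mul (card_le_sum_cover cover) (leqnn _)) _.
rewrite big_distrl /=.
apply: leq_trans (_ : \sum_(ab : assignment n * assignment n)
   (#|{: clause n d}| ^ 2 * (4 ^ d - 1)) ^ m <= _).
  apply: leq_sum => ab _.
  by rewrite card_ffun_pair_all card_ord -expnMn leq_expn2r ?card_sat_pairs_le.
rewrite sum_nat_const !card_prod !card_ffun !card_bool !card_ord -expnMn.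
set K := #|{: clause n d}|.
by rewrite (expnMn (K ^ 2)) -expnM (mulnC 2 m) expnM mulnn mulnA.
Qed.

Local Open Scope R_scope.

Lemma INR_expn a k : INR (a ^ k)%N = INR a ^ k.
Proof. by elim: k => [|k IHk] //; rewrite expnS mult_INR IHk. Qed.

Lemma exp_le_exp x y : x <= y -> exp x <= exp y.
Proof. by move=> le_xy; apply: Rnot_lt_le => /exp_lt_inv; lra. Qed.

Lemma exp_pow x k : exp x ^ k = exp (INR k * x).
Proof. by rewrite -Rpower_pow; [rewrite /Rpower ln_exp | exact: exp_pos]. Qed.

Lemma prob_sat2_le m n d : prob_sat2 m n d <= 4 ^ n * (1 - / 4 ^ d) ^ m.
Proof.
have INR4 : INR 4 = 4 by rewrite /=; ring.
have Q_ge1 : 1 <= 4 ^ d by apply: pow_R1_Rle; lra.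
have inv_Q_le1 : / 4 ^ d <= 1.
  by rewrite -Rinv_1; apply: Rinv_le_contravar; lra.
have bound_ge0 : 0 <= 4 ^ n * (1 - / 4 ^ d) ^ m.
  by apply: Rmult_le_pos; apply: pow_le; lra.
have /leP/le_INR := card_sat2_le m n d.
rewrite !mult_INR !INR_expn minus_INR; last exact/leP/expn_gt0.
rewrite INR_expn INR4 /prob_sat2; change (INR 1) with 1.
set S := INR #|_|; set T := INR #|_|.
have /Rle_lt_or_eq_dec [T_gt0 | T_eq0] : 0 <= T by exact: pos_INR.
  have -> : 4 ^ d - 1 = (1 - / 4 ^ d) * 4 ^ d by field; lra.
  rewrite Rpow_mult_distr => le_S; apply/Rle_div_l => //.
  apply: (Rmult_le_reg_r ((4 ^ d) ^ m)); first by apply: pow_lt; lra.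
  lra.
(* No clauses at all (d > n): the probability is the junk value 0 / 0 = 0. *)
by move=> _; rewrite -T_eq0 /Rdiv Rinv_0 Rmult_0_r.
Qed.

Lemma prob_sat2_le_geom (c : R) m n d :
  INR m >= c * INR n * 2 ^ (2 * d) -> prob_sat2 m n d <= (4 * exp (- c)) ^ n.
Proof.
move=> hm; apply: Rle_trans (prob_sat2_le m n d) _.
have Q_gt0 : 0 < 4 ^ d by apply: pow_lt; lra.
have inv_Q_le1 : / 4 ^ d <= 1.
  by rewrite -Rinv_1; apply: Rinv_le_contravar; [lra | apply: pow_R1_Rle; lra].
rewrite Rpow_mult_distr; apply: Rmult_le_compat_l; first by apply: pow_le; lra.
apply: Rle_trans (_ : exp (- / 4 ^ d) ^ m <= _).
  apply: pow_incr; split; first lra.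
  by have := exp_ineq1_le (- / 4 ^ d); lra.
rewrite !exp_pow; apply: exp_le_exp.
rewrite pow_mult (_ : 2 ^ 2 = 4) in hm; last ring.
have scaled : c * INR n <= INR m * / 4 ^ d.
  apply: (Rmult_le_reg_r (4 ^ d)) => //.
  have -> : INR m * / 4 ^ d * 4 ^ d = INR m by field; lra.
  lra.
lra.
Qed.

Lemma prob_sat2_ge0 m n d : 0 <= prob_sat2 m n d.
Proof.
rewrite /prob_sat2; have := pos_INR #|{: formula2 m n d}|.
case/Rle_lt_or_eq_dec => [T_gt0 | <-].
  by apply: Rdiv_le_0_compat => //; exact: pos_INR.
by rewrite /Rdiv Rinv_0 Rmult_0_r; lra.
Qed.

Lemma four_exp_neg_lt1 c : c > 2 / log2 (exp 1) -> 4 * exp (- c) < 1.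
Proof.
have ln2_gt0 : 0 < ln 2 by rewrite -ln_1; apply: ln_increasing; lra.
rewrite /log2 ln_exp (_ : 2 / (1 / ln 2) = ln 4); last first.
  rewrite (_ : 4 = 2 * 2); last ring.
  by rewrite ln_mult; [field; lra | lra | lra].
move=> /Ropp_lt_contravar/exp_increasing.
by rewrite (exp_Ropp (ln 4)) exp_ln; lra.
Qed.

Theorem mainTheorem4 (c : R) (hc : c > 2 / log2 (exp 1))
  (d m : nat -> nat)
  (hd : forall n : nat, (0 < n)%N -> (1 <= d n <= n)%N)
  (hm : forall n : nat, (0 < n)%N ->
          INR (m n) >= c * INR n * 2 ^ (2 * d n))
  : is_lim_seq (fun n => prob_sat2 (m n) n (d n)) (Rbar.Finite 0).
Proof.
(* The bound of prob_sat2_le_geom holds for every d. *)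
have r_lt1 := four_exp_neg_lt1 hc.
have r_ge0 : 0 <= 4 * exp (- c) by have := exp_pos (- c); lra.
apply: (is_lim_seq_le_le_loc (fun _ => 0) _ (fun n => (4 * exp (- c)) ^ n)).
- exists 1%N => n /leP n_gt0; split; first exact: prob_sat2_ge0.
  exact: prob_sat2_le_geom (hm n n_gt0).
- exact: is_lim_seq_const.
- by apply: is_lim_seq_geom; rewrite Rabs_right; lra.
Qed.
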